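(* Every ideal triangulation $T$ of $(S,V)$ admits a branching.
   Context: $S$ is a compact closed connected surface and $V\subset S$ is a finite set of $n$ marked points with $\chi(S)-n<0$. An ideal triangulation of $(S,V)$ is a possibly loose triangulation of $S$ (self- and multiple adjacencies allowed) with vertex set exactly $V$, i.e. obtained by gluing abstract triangles along abstract edges in pairs. A branching of $T$ is a choice of orientation of each edge such that, on every abstract triangle, the induced orientations of its three edges are induced by a total order of its vertices, each edge pointing towards the larger endpoint. Equivalently, it is a $\Delta$-complex structure on $T$. *)

From HB Require Import structures.
From mathcomp Require Import all_boot all_order all_algebra.
Set Implicit Arguments. Unset Strict Implicit. Unset Printing Implicit Defensive.

(* Each triangle [t] has three
   corners [(t, c)], c : 'I_3, and three sides [(t, k)], k : 'I_3; side k of t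
   is the segment joining corner k to corner [ordS k] (= k+1 mod 3).
   A gluing is given by
   - [g : T * 'I_3 -> T * 'I_3], pairing the sides (fixed-point-free involution);
   - [f : T * 'I_3 -> bool], telling how the sides are identified:
       f s = false : corner k |-> corner k',  corner k+1 |-> corner k'+1,
       f s = true  : corner k |-> corner k'+1, corner k+1 |-> corner k',
     where g s = (t', k').  Both kinds are allowed (S need not be orientable). *)

Section Triang.
Variable T : finType.
Variables (g : T * 'I_3 -> T * 'I_3) (f : T * 'I_3 -> bool).

Definition gluing_ok : Prop :=
  [/\ involutive g, (forall s, g s != s) & (forall s, f (g s) = f s)].

Definition glued_corner0 (s : T * 'I_3) : T * 'I_3 :=
  let: (t', k') := g s in if f s then (t', ordS k') else (t', k').
Definition glued_corner1 (s : T * 'I_3) : T * 'I_3 :=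
  let: (t', k') := g s in if f s then (t', k') else (t', ordS k').

Definition corner_adj : rel (T * 'I_3) := fun x y =>
  [exists s : T * 'I_3,
     ((s == x) && (glued_corner0 s == y)) ||
     (((s.1, ordS s.2) == x) && (glued_corner1 s == y))].

Definition corner_equiv : rel (T * 'I_3) :=
  connect (fun x y => corner_adj x y || corner_adj y x).

Definition vertices : {set {set T * 'I_3}} :=
  equivalence_partition corner_equiv setT.
Definition nvertices : nat := #|vertices|.
(* edges = pairs of glued sides *)
Definition nedges : nat := #|{: T * 'I_3}| %/ 2.
Definition nfaces : nat := #|T|.

Definition euler_char : int := (nvertices%:Z - nedges%:Z + nfaces%:Z)%R.

(* the glued surface is connected: the dual graph is connected *)
Definition tri_adj : rel T := fun a b =>
  [exists k : 'I_3, exists k' : 'I_3, g (a, k) == (b, k')].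
Definition connected_triang : Prop := forall a b : T, connect tri_adj a b.

(* A branching: an orientation of each edge.  [o s = true] means that side
   s = (t,k) is oriented from corner k to corner k+1.  Orientations of glued
   sides must agree as orientations of the same edge, and on each triangle the
   orientations must be induced by a total order of its three corners, each
   edge pointing towards the larger endpoint. *)
Definition branching (o : T * 'I_3 -> bool) : Prop :=
  (forall s, o (g s) = o s (+) f s) /\
  (forall t : T, exists r : 'I_3 -> nat,
      injective r /\ forall k : 'I_3, o (t, k) = (r k < r (ordS k))%N).

End Triang.

From HB Require Import structures.
From mathcomp Require Import all_boot all_order all_algebra.
Set Implicit Arguments. Unset Strict Implicit. Unset Printing Implicit Defensive.

(* An orientation o of the sides is a branching iff it is consistent with the
   gluing and no triangle is cyclic, i.e. the three sides of each triangle do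
   not all carry the same boolean (ranking_of_nonconstant).  Consistency is
   preserved when one edge (both of its sides) is reoriented at will, so the
   triangles can be repaired one at a time: a triangle x is repaired by
   reorienting a side of x glued to a triangle not yet treated.
   To make this work we choose a root side s whose edge is not a bridge of
   the dual graph (exists_nonbridge, via a longest simple path).  Then every
   triangle is joined to the root triangle s.1 in the dual graph with the
   edge of s removed (connect_off_of_connect), and an induction on the set of
   triangles still to be treated (fix_all_but_root) repairs all triangles
   except s.1 without touching the edge of s.  The root triangle is finally
   repaired by reorienting s. *)

Definition i0 : 'I_3 := @Ordinal 3 0 isT.
Definition i1 : 'I_3 := @Ordinal 3 1 isT.
Definition i2 : 'I_3 := @Ordinal 3 2 isT.

Lemma ord3P (k : 'I_3) : [\/ k = i0, k = i1 | k = i2].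
Proof.
case: k => [[|[|[|m]]] Hk] //; [constructor 1 | constructor 2 | constructor 3];
  exact: val_inj.
Qed.

Lemma ordS_i0 : ordS i0 = i1. Proof. exact: val_inj. Qed.
Lemma ordS_i1 : ordS i1 = i2. Proof. exact: val_inj. Qed.
Lemma ordS_i2 : ordS i2 = i0. Proof. exact: val_inj. Qed.
Definition ordSE := (ordS_i0, ordS_i1, ordS_i2).

Lemma ordS_neq (k : 'I_3) : ordS k != k.
Proof. by case: (ord3P k) => ->; rewrite ordSE. Qed.

Lemma pick_other (T : eqType) (x : T) (k : 'I_3) (e : T * 'I_3) :
  exists j, j != k /\ (x, j) != e.
Proof.
case: (eqVneq (x, ordS k) e) => [<-|ne]; last by exists (ordS k); rewrite ordS_neq.
exists (ordS (ordS k)); rewrite xpair_eqE eqxx ordS_neq; split=> //.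
by case: (ord3P k) => ->; rewrite !ordSE.
Qed.

Lemma acyclic_triple (a b c : bool) : ~~ [&& a == b & b == c] ->
  exists x y z : nat, [/\ uniq [:: x; y; z], a = (x < y), b = (y < z) & c = (z < x)]%N.
Proof.
case: a; case: b; case: c => //= _.
- by exists 0%N, 1%N, 2%N.
- by exists 1%N, 2%N, 0%N.
- by exists 0%N, 2%N, 1%N.
- by exists 2%N, 0%N, 1%N.
- by exists 1%N, 0%N, 2%N.
- by exists 2%N, 1%N, 0%N.
Qed.

Lemma ranking_of_nonconstant (b : 'I_3 -> bool) (i j : 'I_3) : b i != b j ->
  exists r : 'I_3 -> nat, injective r /\ forall k, b k = (r k < r (ordS k))%N.
Proof.
move=> bij.
have nc : ~~ [&& b i0 == b i1 & b i1 == b i2].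
  apply: contra bij => /andP[/eqP b01 /eqP b12].
  by case: (ord3P i) => ->; case: (ord3P j) => ->; rewrite ?b01 ?b12.
have [x [y [z [u bx by_ bz]]]] := acyclic_triple nc.
exists (fun k : 'I_3 => nth 0%N [:: x; y; z] k); split.
  by move=> k1 k2 /eqP; rewrite nth_uniq // => /eqP /val_inj.
by move=> k; case: (ord3P k) => ->; rewrite ordSE.
Qed.

Lemma exit_edge (T : finType) (e : rel T) (X : {set T}) u v :
  connect e u v -> u \in X -> v \notin X -> exists x y, [/\ x \in X, y \notin X & e x y].
Proof.
case/connectP => p; elim: p u => [|y p IH] u /=; first by move=> _ -> ->.
move=> /andP[euy py] ev uX nX.
case yX: (y \in X); first exact: (IH y py ev yX nX).
by exists u, y; rewrite yX.
Qed.

Lemma maximal_simple_path (T : finType) (e : rel T) (x0 : T) :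
  exists v0 (p : seq T),
    [/\ uniq (v0 :: p), path e v0 p & forall w, e w v0 -> w \in v0 :: p].
Proof.
pose P n := [exists v0 : T, exists p : n.-tuple T, uniq (v0 :: p) && path e v0 p].
have P0 : exists n, P n by exists 0%N; apply/existsP; exists x0; apply/existsP; exists [tuple].
have P_bounded n : P n -> (n <= #|T|)%N.
  case/existsP=> v0 /existsP[p /andP[u _]].
  by have := max_card (mem (v0 :: p)); rewrite (card_uniqP u) /= size_tuple => /ltnW.
case: (ex_maxnP P0 P_bounded) => m /existsP[v0 /existsP[p /andP[u pa]]] maxm.
exists v0, p; split=> // w ew; apply/negPn/negP => nw.
have : P m.+1.
  apply/existsP; exists w; apply/existsP; exists [tuple of v0 :: p].
  by rewrite /= nw ew pa -[_ && uniq p]/(uniq (v0 :: p)) u.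
by move/maxm; rewrite ltnn.
Qed.

Section Branching.
Variable T : finType.
Variables (g : T * 'I_3 -> T * 'I_3) (f : T * 'I_3 -> bool).
Hypothesis gK : involutive g.
Hypothesis g_nofix : forall s, g s != s.
Hypothesis f_g : forall s, f (g s) = f s.

Definition consistent (o : T * 'I_3 -> bool) : Prop := forall s, o (g s) = o s (+) f s.

Definition nonconstant (o : T * 'I_3 -> bool) (t : T) : Prop :=
  exists i j : 'I_3, o (t, i) != o (t, j).

Definition reorient (e : T * 'I_3) (b : bool) (o : T * 'I_3 -> bool) z : bool :=
  if z == e then b else if z == g e then b (+) f e else o z.

Lemma reorient_at e b o : reorient e b o e = b.
Proof. by rewrite /reorient eqxx. Qed.

Lemma reorient_off e b o z : z != e -> z != g e -> reorient e b o z = o z.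
Proof. by rewrite /reorient => /negbTE -> /negbTE ->. Qed.

Lemma reorient_congr e b o1 o2 z : o1 z = o2 z -> reorient e b o1 z = reorient e b o2 z.
Proof. by rewrite /reorient => ->. Qed.

(* Some consistent orientation exists: orient each edge by comparing the
   ranks of its two sides. *)
Lemma consistent_exists : exists o, consistent o.
Proof.
exists (fun x => (enum_rank (g x) < enum_rank x)%N && f x) => x.
rewrite gK f_g; case: (f x); rewrite ?andbF ?andbT ?addbT // -leqNgt ltn_neqAle.
by rewrite (inj_eq val_inj) (inj_eq enum_rank_inj) eq_sym g_nofix.
Qed.

Lemma reorient_consistent e b o : consistent o -> consistent (reorient e b o).
Proof.
move=> co x; rewrite /reorient (inj_eq (can_inj gK)).
have -> : (g x == e) = (x == g e) by rewrite -(inj_eq (can_inj gK)) gK.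
case: (eqVneq x e) => [->|ne]; first by rewrite eq_sym (negbTE (g_nofix e)).
case: (eqVneq x (g e)) => [->|_]; last exact: co.
by rewrite f_g -addbA addbb addbF.
Qed.

Lemma branching_of_nonconstant o :
  consistent o -> (forall t, nonconstant o t) -> branching g f o.
Proof.
move=> co nco; split=> // t; have [i [j ne]] := nco t.
exact: (ranking_of_nonconstant (b := fun k => o (t, k)) ne).
Qed.

Section Root.
(* The root side s; its edge is kept free until the very end. *)
Variable s : T * 'I_3.

Definition tri_adj_off : rel T := fun a b =>
  [exists k : 'I_3, exists k' : 'I_3,
     [&& g (a, k) == (b, k'), (a, k) != s & (a, k) != g s]].

Lemma tri_adj_off_sym : symmetric tri_adj_off.
Proof.
suff adj_sym a b : tri_adj_off a b -> tri_adj_off b a.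
  by move=> a b; apply/idP/idP; apply: adj_sym.
case/existsP=> k /existsP[k' /and3P[/eqP e ns ngs]].
apply/existsP; exists k'; apply/existsP; exists k.
rewrite -e gK eqxx /=; apply/andP; split.
  by apply: contra ngs => /eqP <-; rewrite gK.
by apply: contra ns => /eqP /(can_inj gK) ->.
Qed.

Lemma connect_off_of_connect : connect tri_adj_off s.1 (g s).1 ->
  forall u v, connect (tri_adj g) u v -> connect tri_adj_off u v.
Proof.
move=> s_off; apply: connect_sub => a b /existsP[k /existsP[k' /eqP gak]].
case: (eqVneq (a, k) s) => [as_|ns].
  by rewrite -[a]/(a, k).1 -[b]/(b, k').1 -gak as_.
case: (eqVneq (a, k) (g s)) => [ags|ngs].
  have bs : (b, k') = s by rewrite -gak ags gK.
  by rewrite (sym_connect_sym tri_adj_off_sym) -[a]/(a, k).1 -[b]/(b, k').1 ags bs.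
by apply: connect1; apply/existsP; exists k; apply/existsP; exists k'; rewrite gak eqxx ns.
Qed.

Lemma path_connect_off a q : path (tri_adj g) a q ->
  s.1 \notin a :: q -> (g s).1 \in a :: q -> connect tri_adj_off a (g s).1.
Proof.
elim: q a => [|b q IH] a /=; first by move=> _ _; rewrite inE => /eqP <-.
case/andP=> ab pq; rewrite inE negb_or => /andP[nsa nin].
rewrite inE => /orP[/eqP <-|win]; first exact: connect0.
case: (eqVneq a (g s).1) => [<-|naw]; first exact: connect0.
apply: connect_trans (IH b pq nin win); apply: connect1.
case/existsP: ab => k1 /existsP[k2 e]; apply/existsP; exists k1; apply/existsP; exists k2.
rewrite e /=; apply/andP; split; first by apply: contra nsa => /eqP <-.
by apply: contra naw => /eqP <-.
Qed.

(* o makes every triangle of X non-cyclic, whatever boolean the root side s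
   is later given. *)
Definition repaired (o : T * 'I_3 -> bool) (X : {set T}) : Prop :=
  forall b t, t \in X -> nonconstant (reorient s b o) t.

Lemma fix_triangle (X : {set T}) x y k k' o :
  s.1 \notin X -> x \in X -> y \notin X -> g (x, k) = (y, k') ->
  (x, k) != s -> (x, k) != g s -> consistent o -> repaired o (X :\ x) ->
  exists o', consistent o' /\ repaired o' X.
Proof.
move=> sX xX yX gxk xks xkgs co good.
have [j [jk xjgs]] := pick_other x k (g s).
have xjs : (x, j) != s by apply: contraNneq sX => <-.
have xy : x != y by apply: contraNneq yX => <-.
exists (reorient (x, k) (~~ o (x, j)) o); split; first exact: reorient_consistent.
move=> b t tX; case: (eqVneq t x) => [->|tx].
  exists k, j.
  rewrite (reorient_off _ _ xks xkgs) (reorient_off _ _ xjs xjgs) reorient_at.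
  rewrite reorient_off; first by case: (o (x, j)).
    by rewrite xpair_eqE eqxx.
  by rewrite gxk xpair_eqE negb_and xy.
have [i1 [i2 ne]] : nonconstant (reorient s b o) t by apply: good; rewrite in_setD1 tx.
have t_untouched i : reorient s b (reorient (x, k) (~~ o (x, j)) o) (t, i)
                   = reorient s b o (t, i).
  apply/reorient_congr/reorient_off; rewrite ?gxk xpair_eqE negb_and ?tx //.
  by apply/orP; left; apply: contraNneq yX => <-.
by exists i1, i2; rewrite !t_untouched.
Qed.

Lemma fix_all_but_root n (X : {set T}) : #|X| = n -> s.1 \notin X ->
  (forall u, u \in X -> exists2 v, v \notin X & connect tri_adj_off u v) ->
  exists o, consistent o /\ repaired o X.
Proof.
elim: n X => [|n IH] X cardX sX X_exits.
  have [o co] := consistent_exists.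
  by exists o; split=> // b t; rewrite (cards0_eq cardX) inE.
have [u uX] : exists u, u \in X by apply/card_gt0P; rewrite cardX.
have [v vX uv] := X_exits u uX.
have [x [y [xX yX /existsP[k /existsP[k' /and3P[/eqP gxk xks xkgs]]]]]] := exit_edge uv uX vX.
have [|||o [co good]] := IH (X :\ x).
- by move: cardX; rewrite (cardsD1 x) xX add1n => -[].
- by rewrite in_setD1 (negbTE sX) andbF.
- move=> w /setD1P[_ wX]; have [w' w'X ww'] := X_exits w wX.
  by exists w' => //; rewrite in_setD1 (negbTE w'X) andbF.
exact: fix_triangle sX xX yX gxk xks xkgs co good.
Qed.

End Root.

(* A side whose edge is not a bridge of the dual graph: at the start v0 of a
   longest simple path, a side other than the one used by the path leads back
   onto the path. *)
Lemma exists_nonbridge (x0 : T) : exists s, connect (tri_adj_off s) s.1 (g s).1.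
Proof.
have [v0 [p [u pa maxp]]] := maximal_simple_path (tri_adj g) x0.
have {maxp} partner_on_path s : s.1 = v0 -> (g s).1 \in v0 :: p.
  move=> sv; apply: maxp; apply/existsP; exists (g s).2; apply/existsP; exists s.2.
  by rewrite -surjective_pairing gK -sv -surjective_pairing.
case: p u pa partner_on_path => [|v1 q] u pa partner_on_path.
  exists (v0, i0); move: (partner_on_path (v0, i0) erefl); rewrite inE => /eqP ->.
  exact: connect0.
case/andP: pa => /existsP[k0 /existsP[k' /eqP gk]] pa.
exists (v0, ordS k0) => /=.
move: (partner_on_path (v0, ordS k0) erefl); rewrite inE => /orP[/eqP ->|win].
  exact: connect0.
case: (eqVneq v0 (g (v0, ordS k0)).1) => [<-|nw]; first exact: connect0.
apply: connect_trans (path_connect_off pa _ win); last by case/andP: u.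
apply: connect1; apply/existsP; exists k0; apply/existsP; exists k'.
rewrite gk eqxx xpair_eqE eqxx eq_sym (negbTE (ordS_neq k0)) /=.
by apply: contra nw => /eqP <-.
Qed.

Lemma branching_exists : connected_triang g -> exists o, branching g f o.
Proof.
move=> conn; case: (pickP (fun _ : T => true)) => [x0 _|T0]; last first.
  by exists xpredT; split=> [[t]|t]; have := T0 t.
have [s s_off] := exists_nonbridge x0.
pose X := [set: T] :\ s.1.
have [||o [co good]] := fix_all_but_root (s := s) (X := X) erefl.
- by rewrite in_setD1 eqxx.
- move=> u _; exists s.1; first by rewrite in_setD1 eqxx.
  exact: connect_off_of_connect s_off _ _ (conn u s.1).
have [j [js2 sjgs]] := pick_other s.1 s.2 (g s).
have sjs : (s.1, j) != s by rewrite {2}(surjective_pairing s) xpair_eqE eqxx.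
exists (reorient s (~~ o (s.1, j)) o).
apply: branching_of_nonconstant; first exact: reorient_consistent.
move=> t; case: (eqVneq t s.1) => [->|ts]; last by apply: good; rewrite in_setD1 ts in_setT.
exists s.2, j; rewrite -surjective_pairing reorient_at reorient_off //.
by case: (o (s.1, j)).
Qed.

End Branching.

Theorem lemma2p9 (T : finType) (g : T * 'I_3 -> T * 'I_3) (f : T * 'I_3 -> bool) :
  gluing_ok g f ->
  connected_triang g ->
  (euler_char g f - (nvertices g f)%:Z < 0)%R ->
  exists o : T * 'I_3 -> bool, branching g f o.
Proof. by case=> gK g_nofix f_g conn _; exact: branching_exists. Qed.
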